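(* Let $N\ge 0$ and let $\mu=(\mu_1,\dots,\mu_{N+1})$ be a partition with $N+1$ parts. Then, for all $z_1,\dots,z_{N+1}$ (with pairwise distinct values so that the defining quotients make sense, the identity then extending polynomially), $$G_\mu(z_1,\dots,z_N,z_{N+1};\beta)=\sum_{\lambda:\ \mu\succ\lambda} G_{\mu/\lambda}(z_{N+1};\beta)\,G_\lambda(z_1,\dots,z_N;\beta),$$ where the sum runs over all partitions $\lambda=(\lambda_1,\dots,\lambda_N)$ with $N$ parts interlacing with $\mu$. At $\beta=0$ this is the corresponding branching rule for Schur and skew Schur polynomials.
   Context: A ''partition with $N$ parts'' means a weakly decreasing sequence $\lambda=(\lambda_1,\dots,\lambda_N)$ of nonnegative integers (zeros allowed); $|\lambda|=\sum_j\lambda_j$. For such $\lambda$, variables $z_1,\dots,z_N$ and a parameter $\beta$, the Grothendieck polynomial is $$G_\lambda(z_1,\dots,z_N;\beta)=\frac{\det_{1\le j,k\le N}\big(z_j^{\lambda_k+N-k}(1+\beta z_j)^{k-1}\big)}{\prod_{1\le j<k\le N}(z_j-z_k)},$$ (a symmetric polynomial; for $N=0$ it equals $1$). For $\mu$ with $N+1$ parts and $\lambda$ with $N$ parts, write $\mu\succ\lambda$ (''interlace'') iff $\mu_j\ge\lambda_j\ge\mu_{j+1}$ for $j=1,\dots,N$. The single-variable skew Grothendieck polynomial is $$G_{\mu/\lambda}(z;\beta)=\begin{cases} z^{|\mu|-|\lambda|}\prod_{j=1}^N\big(1+\beta z-\beta z\,\delta_{\mu_{j+1},\lambda_j}\big)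 & \text{if } \mu\succ\lambda,\\ 0&\text{otherwise,}\end{cases}$$ with $\delta$ the Kronecker delta. *)

From HB Require Import structures.
From mathcomp Require Import all_boot all_order all_algebra.
Set Implicit Arguments. Unset Strict Implicit. Unset Printing Implicit Defensive.
Import Order.TTheory GRing.Theory Num.Theory.
Local Open Scope ring_scope.

(* A partition with n parts: weakly decreasing lam : 'I_n -> nat
   (index j : 'I_n stands for the paper's index j+1). *)
Definition is_partition (n : nat) (lam : 'I_n -> nat) : bool :=
  [forall i : 'I_n, forall j : 'I_n, (i <= j)%N ==> (lam j <= lam i)%N].

Definition psize (n : nat) (lam : 'I_n -> nat) : nat := (\sum_(j < n) lam j)%N.

(* Grothendieck polynomial G_lam(z_1..z_N; beta), as the quotient
   det( z_j^(lam_k + N - k) (1 + beta z_j)^(k-1) ) / prod_{j<k} (z_j - z_k),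
   with 0-based indices j,k : 'I_N (paper's k = k0 + 1). *)
Definition groth (R : fieldType) (N : nat) (lam : 'I_N -> nat)
  (z : 'I_N -> R) (beta : R) : R :=
  \det (\matrix_(j < N, k < N)
          (z j ^+ (lam k + (N - k.+1)) * (1 + beta * z j) ^+ k))
  / \prod_(j < N) \prod_(k < N | (j < k)%N) (z j - z k).

Definition interlace (N : nat) (mu : 'I_N.+1 -> nat) (lam : 'I_N -> nat) : bool :=
  [forall j : 'I_N,
     (lam j <= mu (widen_ord (leqnSn N) j))%N && (mu (lift ord0 j) <= lam j)%N].

Definition skew_groth (R : fieldType) (N : nat) (mu : 'I_N.+1 -> nat)
  (lam : 'I_N -> nat) (x beta : R) : R :=
  if interlace mu lam then
    x ^+ (psize mu - psize lam) *
    \prod_(j < N) (1 + beta * x - beta * x * ((mu (lift ord0 j) == lam j) : nat)%:R)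
  else 0.

From HB Require Import structures.
From mathcomp Require Import all_boot all_algebra perm.
From mathcomp Require Import ring zify.
Set Implicit Arguments. Unset Strict Implicit. Unset Printing Implicit Defensive.
Import GRing.Theory.
Local Open Scope ring_scope.

(* Write G_mu = D_mu / V with D_mu = det(z_j^(mu_k+N+1-k) (1+b z_j)^(k-1))
   and V the Vandermonde product; put x = z_(N+1) and y = 1 + b x.
   Right-multiplying the matrix of D_mu by a bidiagonal matrix U with
   det U = y^N performs the column operations
       C_k <- y C_k - x^(mu_k - mu_(k+1) + 1) C_(k+1)      (k <= N).
   The last row becomes (0, ..., 0, x^(mu_(N+1))), and in every other row j
   each new entry is (z_j - x) times a polynomial in z_j whose coefficients
   ("branching coefficients") are supported on mu_(k+1) <= l <= mu_k
   (lemma [branch_coef_telescope]).  Expanding along the last row and then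
   multilinearly in the columns gives
       y^N D_mu = y^N x^(mu_(N+1)) prod_j (z_j - x) sum_l (prod_k c_k(l_k)) D_l.
   Cancelling y^N is done over F[b] (where y^N is a nonzero polynomial) and
   then specialising b.  Finally the product of branching coefficients
   multiplied by x^(mu_(N+1)) is exactly the skew polynomial G_{mu/l}(x), it
   vanishes unless l interlaces mu, and dividing by V gives the theorem. *)

Section BranchCoef.
Variable R : comNzRingType.

(* The coefficient of z^l in ((1+bx) z^(A+1) - x^(A-B+1) z^B (1+bz)) / (z-x):
   x^(A-l) (1+bx) for B < l <= A, x^(A-B) for l = B, and 0 otherwise. *)
Definition branch_coef (x b : R) (B A L : nat) (l : 'I_L) : R :=
  if (B <= l)%N && (l <= A)%N then
    x ^+ (A - l) * (if l == B :> nat then 1 else 1 + b * x)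
  else 0.

Lemma branch_coef_telescope (x z b : R) (B L t : nat) : (B + t < L)%N ->
  (1 + b * x) * z ^+ (B + t).+1 - x ^+ t.+1 * z ^+ B * (1 + b * z) =
  (z - x) * \sum_(l < L) branch_coef x b B (B + t) l * z ^+ l.
Proof.
elim: t => [|t IH] ltBL.
  rewrite (bigD1 (Ordinal ltBL)) //= big1 => [|i neBi].
    rewrite /branch_coef /= addn0 leqnn eqxx subnn expr0 mul1r !exprS /= expr0.
    ring.
  rewrite /branch_coef addn0; case: ifP => [/andP[le1 le2]|]; last by rewrite mul0r.
  suff eqiB : i = Ordinal ltBL by rewrite eqiB eqxx in neBi.
  by apply/val_inj => /=; lia.
have ltBL' : (B + t < L)%N by lia.
set top := Ordinal ltBL.
have sum_step : \sum_(l < L) branch_coef x b B (B + t.+1) l * z ^+ l =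
   x * \sum_(l < L) branch_coef x b B (B + t) l * z ^+ l
   + (1 + b * x) * z ^+ (B + t.+1).
  rewrite big_distrr /= (bigD1 top) //= [in RHS](bigD1 top) //=.
  rewrite /branch_coef /= leqnn leq_addr /=.
  rewrite (_ : (B + t.+1 <= B + t)%N = false); last by lia.
  rewrite (_ : (B + t.+1 == B) = false); last by lia.
  rewrite subnn expr0 mul1r mul0r mulr0 add0r addrC; congr (_ + _).
  apply: eq_bigr => i neitop.
  have {}neitop : (i : nat) <> B + t.+1.
    by move=> eqi; case/eqP: neitop; exact: val_inj.
  case: (leqP B i) => leBi /=; last by rewrite !mul0r mulr0.
  case: (leqP i (B + t)) => leit.
    rewrite (_ : (i <= B + t.+1)%N); last by lia.
    rewrite (_ : B + t.+1 - i = (B + t - i).+1)%N; last by lia.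
    rewrite exprS; ring.
  by rewrite (_ : (i <= B + t.+1)%N = false) ?mul0r ?mulr0 //; lia.
rewrite sum_step (mulrDr (z - x)) mulrCA -(IH ltBL') addnS !exprS; ring.
Qed.

End BranchCoef.

Lemma branch_coef_map (R S : comNzRingType) (f : {rmorphism R -> S}) x b B A L
    (l : 'I_L) :
  f (branch_coef x b B A l) = branch_coef (f x) (f b) B A l.
Proof.
rewrite /branch_coef; case: ifP => _; last by rewrite rmorph0.
rewrite rmorphM rmorphXn; case: ifP => _; first by rewrite rmorph1.
by rewrite rmorphD rmorph1 rmorphM.
Qed.

Lemma det_mx_sum_cols (R : comNzRingType) n m (F : 'I_n -> 'I_m -> R)
    (G : 'I_n -> 'I_n -> 'I_m -> R) :
  \det (\matrix_(j, k) \sum_(l < m) F k l * G j k l) =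
  \sum_(f : {ffun 'I_n -> 'I_m})
     (\prod_k F k (f k)) * \det (\matrix_(j, k) G j k (f k)).
Proof.
rewrite -det_tr; under [in RHS]eq_bigr => f _ do rewrite -det_tr.
rewrite /determinant.
under [in LHS]eq_bigr => s _.
  rewrite (eq_bigr (fun k => \sum_(l < m) F k l * G (s k) k l)); last first.
    by move=> k _; rewrite !mxE.
  rewrite bigA_distr_bigA big_distrr /=.
  over.
rewrite exchange_big /=; apply: eq_bigr => f _.
rewrite big_distrr /=; apply: eq_bigr => s _.
rewrite big_split /= mulrCA; congr (_ * (_ * _)).
by apply: eq_bigr => k _; rewrite !mxE.
Qed.

Lemma det_scale_rows (R : comNzRingType) n (d : 'I_n -> R) (B : 'I_n -> 'I_n -> R) :
  \det (\matrix_(i, j) (d i * B i j)) = (\prod_i d i) * \det (\matrix_(i, j) B i j).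
Proof.
have -> : \matrix_(i, j) (d i * B i j) =
          diag_mx (\row_i d i) *m \matrix_(i, j) B i j.
  by rewrite mul_diag_mx; apply/matrixP => i j; rewrite !mxE.
by rewrite det_mulmx det_diag; congr (_ * _); apply: eq_bigr => i _; rewrite mxE.
Qed.

(* The numerator of the Grothendieck polynomial; it makes sense over any
   commutative ring, which is needed to treat b as an indeterminate. *)
Definition groth_num (R : comNzRingType) n (lam : 'I_n -> nat) (z : 'I_n -> R)
    (b : R) : R :=
  \det (\matrix_(j < n, k < n) (z j ^+ (lam k + (n - k.+1)) * (1 + b * z j) ^+ k)).

Lemma groth_num_map (R S : comNzRingType) (f : {rmorphism R -> S}) n lam
    (z : 'I_n -> R) (zS : 'I_n -> S) b bS :
  (forall j, f (z j) = zS j) -> f b = bS ->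
  f (groth_num lam z b) = groth_num lam zS bS.
Proof.
move=> fz fb; rewrite /groth_num -det_map_mx; congr (\det _); apply/matrixP => i j.
by rewrite !mxE rmorphM !rmorphXn rmorphD rmorph1 rmorphM fz fb.
Qed.

Lemma partition_le n (mu : 'I_n -> nat) (i j : 'I_n) :
  is_partition mu -> (i <= j)%N -> (mu j <= mu i)%N.
Proof. by move=> /forallP /(_ i) /forallP /(_ j) /implyP; apply. Qed.

Section ColumnOperations.
Variables (R : comNzRingType) (N : nat) (mu : 'I_N.+1 -> nat) (z : 'I_N.+1 -> R).
Variable b : R.
Hypothesis mu_part : is_partition mu.
Local Notation wd := (widen_ord (leqnSn N)).
Local Notation x := (z ord_max).
Local Notation y := (1 + b * z ord_max).

Definition groth_mx : 'M[R]_N.+1 :=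
  \matrix_(j, k) (z j ^+ (mu k + (N.+1 - k.+1)) * (1 + b * z j) ^+ k).

Definition col_op_mx : 'M[R]_N.+1 :=
  \matrix_(r, k) (if r == k then (if (k < N)%N then y else 1)
                  else if r == k.+1 :> nat then - x ^+ (mu k - mu r).+1 else 0).

(* col_op_mx is lower triangular with diagonal (y, ..., y, 1). *)
Lemma det_col_op_mx : \det col_op_mx = y ^+ N.
Proof.
rewrite det_trig.
  rewrite big_ord_recr /= !mxE eqxx ltnn mulr1.
  rewrite (eq_bigr (fun _ => y)) ?prodr_const ?card_ord // => i _.
  by rewrite !mxE eqxx /= ltn_ord.
apply/forallP => i; apply/forallP => j; apply/implyP => ltij.
rewrite !mxE; have [eqij|_] := eqVneq i j; first by rewrite eqij ltnn in ltij.
have [eqi|//] := eqVneq (i : nat) j.+1.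
by rewrite eqi ltnNge leqnSn in ltij.
Qed.

Lemma lift0_neq_wd (k : 'I_N) : lift ord0 k != wd k.
Proof.
by apply/eqP => /(congr1 (@nat_of_ord _)); rewrite lift0 /= => /esym /n_Sn.
Qed.

Lemma col_op_wd i (k : 'I_N) : (groth_mx *m col_op_mx) i (wd k) =
  y * groth_mx i (wd k)
  - x ^+ (mu (wd k) - mu (lift ord0 k)).+1 * groth_mx i (lift ord0 k).
Proof.
rewrite mxE (bigD1 (wd k)) //= (bigD1 (lift ord0 k)) /=; last first.
  by rewrite lift0_neq_wd.
rewrite big1 => [|r /andP[ne1 ne2]]; last by rewrite !mxE (negbTE ne1) ifN ?mulr0.
rewrite /col_op_mx !mxE eqxx /= ltn_ord (negbTE (lift0_neq_wd k)).
rewrite /bump leq0n add1n eqxx; ring.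
Qed.

Lemma col_op_max i : (groth_mx *m col_op_mx) i ord_max = groth_mx i ord_max.
Proof.
rewrite mxE (bigD1 ord_max) //= big1 => [|r ner].
  by rewrite !mxE eqxx ltnn mulr1 addr0.
rewrite !mxE (negbTE ner) ifN ?mulr0 //.
by apply/eqP => eqr; have := ltn_ord r; rewrite eqr ltnn.
Qed.

Lemma mu_lift_le (k : 'I_N) : (mu (lift ord0 k) <= mu (wd k))%N.
Proof. by apply: partition_le => //; rewrite lift0 /=. Qed.

Lemma col_op_last_row (k : 'I_N) : (groth_mx *m col_op_mx) ord_max (wd k) = 0.
Proof.
rewrite col_op_wd /groth_mx !mxE lift0 /=.
have := mu_lift_le k; have := ltn_ord k => ltkN lemu.
rewrite (_ : mu (wd k) + (N.+1 - k.+1) =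
   (mu (wd k) - mu (lift ord0 k)).+1 + (mu (lift ord0 k) + (N.+1 - k.+2)))%N;
  last by lia.
rewrite exprD !exprS; ring.
Qed.

Lemma col_op_inner (j k : 'I_N) : (groth_mx *m col_op_mx) (wd j) (wd k) =
  (z (wd j) - x) * \sum_(l < (mu ord0).+1)
     branch_coef x b (mu (lift ord0 k)) (mu (wd k)) l *
     (z (wd j) ^+ (l + (N - k.+1)) * (1 + b * z (wd j)) ^+ k).
Proof.
rewrite col_op_wd /groth_mx !mxE lift0 /=.
have := mu_lift_le k; have := ltn_ord k; have : (mu (wd k) <= mu ord0)%N.
  exact: partition_le.
set B := mu (lift ord0 k); set A := mu (wd k) => leA0 ltkN leBA.
have ltL : (B + (A - B) < (mu ord0).+1)%N by lia.
have := branch_coef_telescope x (z (wd j)) b ltL; rewrite (subnKC leBA) => tele.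
rewrite (_ : A + (N.+1 - k.+1) = A.+1 + (N - k.+1))%N; last by lia.
rewrite (_ : B + (N.+1 - k.+2) = B + (N - k.+1))%N; last by lia.
rewrite !exprD !exprS.
transitivity (((1 + b * x) * z (wd j) ^+ A.+1 -
    x ^+ (A - B).+1 * z (wd j) ^+ B * (1 + b * z (wd j))) *
    (z (wd j) ^+ (N - k.+1) * (1 + b * z (wd j)) ^+ k)).
  by rewrite !exprS; ring.
rewrite tele -mulrA; congr (_ * _); rewrite big_distrl /=; apply: eq_bigr => l _.
rewrite exprD; ring.
Qed.

Lemma groth_num_branch_scaled :
  y ^+ N * groth_num mu z b = y ^+ N * (x ^+ mu ord_max *
  \prod_(j < N) (z (wd j) - x) *
  \sum_(f : {ffun 'I_N -> 'I_(mu ord0).+1})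
     (\prod_k branch_coef x b (mu (lift ord0 k)) (mu (wd k)) (f k)) *
     groth_num (fun j => nat_of_ord (f j)) (fun j => z (wd j)) b).
Proof.
rewrite [in LHS]mulrC -[in LHS]det_col_op_mx -det_mulmx (expand_det_row _ ord_max).
rewrite big_ord_recr /= big1 => [|k _]; last by rewrite col_op_last_row mul0r.
rewrite add0r col_op_max /cofactor /groth_mx [in X in X * _]mxE subnn addn0 /=.
rewrite -signr_odd oddD addbb expr0 mul1r.
have -> : row' ord_max (col' ord_max (groth_mx *m col_op_mx)) =
   \matrix_(j, k) ((z (wd j) - x) * \sum_(l < (mu ord0).+1)
      branch_coef x b (mu (lift ord0 k)) (mu (wd k)) l *
      (z (wd j) ^+ (l + (N - k.+1)) * (1 + b * z (wd j)) ^+ k)).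
  apply/matrixP => j k; rewrite [LHS]mxE [LHS]mxE [RHS]mxE -col_op_inner.
  by congr ((groth_mx *m col_op_mx) _ _); apply/val_inj;
     rewrite /= /bump leqNgt ltn_ord.
rewrite det_scale_rows det_mx_sum_cols /groth_num; ring.
Qed.

End ColumnOperations.

(* Over a field the factor y^N can be cancelled: apply the scaled identity
   over F[b] with b the indeterminate, where y^N has constant term 1, then
   evaluate at b. *)
Lemma groth_num_branch (F : fieldType) N (mu : 'I_N.+1 -> nat) (z : 'I_N.+1 -> F) b :
  is_partition mu ->
  groth_num mu z b = z ord_max ^+ mu ord_max *
  \prod_(j < N) (z (widen_ord (leqnSn N) j) - z ord_max) *
  \sum_(f : {ffun 'I_N -> 'I_(mu ord0).+1})
     (\prod_k branch_coef (z ord_max) b (mu (lift ord0 k))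
                (mu (widen_ord (leqnSn N) k)) (f k)) *
     groth_num (fun j => nat_of_ord (f j)) (fun j => z (widen_ord (leqnSn N) j)) b.
Proof.
move=> mu_part.
have ev_z j : horner_eval b (z j)%:P = z j by exact: hornerC.
have ev_X : horner_eval b 'X = b by exact: hornerX.
have y_neq0 : (1 + 'X * (z ord_max)%:P : {poly F}) ^+ N != 0.
  apply: expf_neq0; apply/eqP => /(congr1 (horner^~ 0)).
  by rewrite !hornerE /= => /eqP; rewrite oner_eq0.
have := groth_num_branch_scaled (fun j => (z j)%:P) 'X mu_part.
move/(mulfI y_neq0)/(congr1 (horner_eval b)).
rewrite (@groth_num_map _ _ (horner_eval b) _ _ _ z _ b ev_z ev_X) => ->.
rewrite !rmorphM rmorphXn /= horner_evalE hornerC rmorph_prod rmorph_sum /=.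
congr (_ * _ * _).
  by apply: eq_bigr => j _; rewrite rmorphB /= !horner_evalE !hornerC.
apply: eq_bigr => f _; rewrite rmorphM rmorph_prod /=.
rewrite (@groth_num_map _ _ (horner_eval b) _ _ _
          (fun j => z (widen_ord (leqnSn N) j)) _ b (fun j => ev_z _) ev_X).
congr (_ * _); apply: eq_bigr => k _.
by rewrite branch_coef_map /= !horner_evalE hornerC hornerX.
Qed.

Lemma vandermonde_recr (F : fieldType) N (z : 'I_N.+1 -> F) :
  \prod_(j < N.+1) \prod_(k < N.+1 | (j < k)%N) (z j - z k) =
  (\prod_(j < N) \prod_(k < N | (j < k)%N)
      (z (widen_ord (leqnSn N) j) - z (widen_ord (leqnSn N) k))) *
  \prod_(j < N) (z (widen_ord (leqnSn N) j) - z ord_max).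
Proof.
rewrite big_ord_recr /= [X in _ * X]big1 ?mulr1 => [|k]; last first.
  by rewrite ltnNge -ltnS ltn_ord.
rewrite -big_split /=; apply: eq_bigr => j _.
by rewrite big_mkcond big_ord_recr /= ltn_ord [in RHS]big_mkcond.
Qed.

Lemma vandermonde_neq0 (F : fieldType) n (z : 'I_n -> F) : injective z ->
  \prod_(j < n) \prod_(k < n | (j < k)%N) (z j - z k) != 0.
Proof.
move=> z_inj; apply/prodf_neq0 => j _; apply/prodf_neq0 => k ltjk.
by rewrite subr_eq0; apply/eqP => /z_inj eqjk; rewrite eqjk ltnn in ltjk.
Qed.

Lemma interlace_partition N (mu : 'I_N.+1 -> nat) (lam : 'I_N -> nat) :
  is_partition mu -> interlace mu lam -> is_partition lam.
Proof.
move=> mu_part /forallP lam_int; apply/forallP => i; apply/forallP => j.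
apply/implyP => leij; have [->//|neqij] := eqVneq i j.
have /andP[lej _] := lam_int j; have /andP[_ lei] := lam_int i.
apply: leq_trans lej _; apply: leq_trans lei; apply: partition_le => //.
by rewrite lift0 /=; have neq_ij : (i : nat) != j := neqij; lia.
Qed.

Lemma skew_groth_branch_coef (R : fieldType) N (mu : 'I_N.+1 -> nat)
    (f : {ffun 'I_N -> 'I_(mu ord0).+1}) (x b : R) :
  x ^+ mu ord_max * \prod_k branch_coef x b (mu (lift ord0 k))
                              (mu (widen_ord (leqnSn N) k)) (f k) =
  skew_groth mu (fun j => nat_of_ord (f j)) x b.
Proof.
rewrite /skew_groth; set lam := fun j => nat_of_ord (f j).
case: (boolP (interlace mu lam)) => [/forallP lam_int | /forallPn [k nk]];
  last first.
  rewrite (bigD1 k) //= /branch_coef andbC (negbTE nk); ring.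
rewrite (eq_bigr (fun k => x ^+ (mu (widen_ord (leqnSn N) k) - lam k) *
   (1 + b * x - b * x * (mu (lift ord0 k) == lam k)%:R))); last first.
  move=> k _; rewrite /branch_coef; have /andP[le1 le2] := lam_int k.
  rewrite -/(lam k) le1 le2 /= eq_sym; congr (_ * _).
  by case: eqP; rewrite ?mulr1 ?mulr0 ?subr0 // addrK.
rewrite big_split /= prodrXr mulrA -exprD; congr (_ ^+ _ * _).
rewrite sumnB => [|k _]; last by have /andP[] := lam_int k.
have : (\sum_k lam k <= \sum_k mu (widen_ord (leqnSn N) k))%N.
  by apply: leq_sum => k _; have /andP[] := lam_int k.
by rewrite /psize big_ord_recr /= [in RHS]addnC => le_sum; rewrite -addnBA.
Qed.

Unset Implicit Arguments.
Theorem mainTheorem1 (R : fieldType) (N : nat) (mu : 'I_N.+1 -> nat)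
  (z : 'I_N.+1 -> R) (beta : R) :
  is_partition mu -> injective z ->
  groth mu z beta =
  \sum_(l : {ffun 'I_N -> 'I_(mu ord0).+1}
          | is_partition (fun j => nat_of_ord (l j))
            && interlace mu (fun j => nat_of_ord (l j)))
     skew_groth mu (fun j => nat_of_ord (l j)) (z ord_max) beta
     * groth (fun j => nat_of_ord (l j)) (fun j => z (widen_ord (leqnSn N) j)) beta.
Proof.
move=> mu_part z_inj.
rewrite /groth -/(groth_num _ _ _) groth_num_branch // vandermonde_recr.
set P := \prod_(j < N) _; set V := \prod_(j < N) \prod_(k < N | _) _.
have P_neq0 : P != 0.
  apply/prodf_neq0 => j _; rewrite subr_eq0; apply/eqP => /z_inj /(congr1 val) /=.
  by move=> eqj; have := ltn_ord j; rewrite eqj ltnn.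
have V_neq0 : V != 0 by apply: vandermonde_neq0 => i j /z_inj [] /val_inj.
rewrite [V * P]mulrC invfM !mulrA (mulrAC _ P) mulfK // big_distrr big_distrl.
rewrite [RHS]big_mkcond /=; apply: eq_bigr => f _.
rewrite mulrA skew_groth_branch_coef -mulrA.
case: (boolP (interlace mu _)) => [lam_int | lam_nint].
  by rewrite (interlace_partition mu_part lam_int).
by rewrite andbF /skew_groth (negbTE lam_nint) !mul0r.
Qed.
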